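(* Let $U\in\mathbb{R}^{n\times d}$, let $\mathbf{x}_*\in\mathbb{R}^d$ be $s$-sparse, $\mathbf{e}\in\mathbb{R}^n$ and $\mathbf{y}=U\mathbf{x}_*+\mathbf{e}$. Let $\mathbf{x}_t$ be an iterate of Algorithm 1 and $\mathbf{x}_{t+1}$ the next iterate; let $\mathcal{S}_t,\mathcal{S}_{t+1},\mathcal{S}_*$ be the supports of $\mathbf{x}_t,\mathbf{x}_{t+1},\mathbf{x}_*$. If $|\mathcal{S}_t\setminus\mathcal{S}_*|\le s$ and $\lambda_t\ge\|U^\top\mathbf{e}\|_\infty+\frac{\delta_s+\sqrt2\theta_{s,s}}{\sqrt s}\|\mathbf{x}_t-\mathbf{x}_*\|_2$, then $|\mathcal{S}_{t+1}\setminus\mathcal{S}_*|\le s$ and $|\mathcal{S}_*\cup\mathcal{S}_t\cup\mathcal{S}_{t+1}|\le3s$.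
   Context: $U_{\mathcal T}$ is the column submatrix of $U$ indexed by $\mathcal T$. $\delta_s$ is the smallest constant $\ge0$ with $(1-\delta_s)\|\mathbf{v}\|_2^2\le\|U_{\mathcal T}\mathbf{v}\|_2^2\le(1+\delta_s)\|\mathbf{v}\|_2^2$ for all $|\mathcal T|\le s$, $\mathbf{v}\in\mathbb{R}^{|\mathcal T|}$; $\theta_{s,s}$ (with $2s\le d$) is the smallest constant with $|\langle U_{\mathcal T}\mathbf{v},U_{\mathcal T'}\mathbf{v}'\rangle|\le\theta_{s,s}\|\mathbf{v}\|_2\|\mathbf{v}'\|_2$ for all disjoint $\mathcal T,\mathcal T'$ of size at most $s$. Algorithm 1: $\mathbf{x}_1=0$ and $\mathbf{x}_{t+1}=\mathrm{sign}(\widehat{\mathbf{x}}_t)[|\widehat{\mathbf{x}}_t|-\lambda_t]_+$ with $\widehat{\mathbf{x}}_t=\mathbf{x}_t-U^\top(U\mathbf{x}_t-\mathbf{y})$ (componentwise), for parameters $\lambda_t>0$. *)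

(* R : rcfType (real closed field; the reals are an instance). *)
From HB Require Import structures.
From mathcomp Require Import all_boot all_order all_algebra.
Set Implicit Arguments. Unset Strict Implicit. Unset Printing Implicit Defensive.
Import Order.TTheory GRing.Theory Num.Theory.
Local Open Scope ring_scope.

Section Defs.
Variable R : rcfType.

Definition sqnorm2 {k : nat} (v : 'cV[R]_k) : R := \sum_i (v i 0) ^+ 2.
Definition norm2 {k : nat} (v : 'cV[R]_k) : R := Num.sqrt (sqnorm2 v).
Definition dotv {k : nat} (a b : 'cV[R]_k) : R := \sum_i a i 0 * b i 0.
Definition norminf {k : nat} (v : 'cV[R]_k) : R := \big[Num.max/0]_i `|v i 0|.

Definition supp {k : nat} (v : 'cV[R]_k) : {set 'I_k} := [set i | v i 0 != 0].

(* U_T : column submatrix of U indexed by T (columns in increasing order) *)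
Definition colsubT {n d : nat} (U : 'M[R]_(n, d)) (T : {set 'I_d}) : 'M[R]_(n, #|T|) :=
  colsub (fun j : 'I_#|T| => enum_val j) U.

Definition rip_ineq {n d : nat} (U : 'M[R]_(n, d)) (s : nat) (c : R) : Prop :=
  forall T : {set 'I_d}, (#|T| <= s)%N -> forall v : 'cV[R]_#|T|,
    (1 - c) * sqnorm2 v <= sqnorm2 (colsubT U T *m v) <= (1 + c) * sqnorm2 v.

Definition is_delta {n d : nat} (U : 'M[R]_(n, d)) (s : nat) (delta : R) : Prop :=
  [/\ 0 <= delta, rip_ineq U s delta &
      forall c, 0 <= c -> rip_ineq U s c -> delta <= c].

Definition roc_ineq {n d : nat} (U : 'M[R]_(n, d)) (s : nat) (c : R) : Prop :=
  forall T T' : {set 'I_d}, (#|T| <= s)%N -> (#|T'| <= s)%N -> [disjoint T & T'] ->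
    forall (v : 'cV[R]_#|T|) (v' : 'cV[R]_#|T'|),
      `|dotv (colsubT U T *m v) (colsubT U T' *m v')| <= c * norm2 v * norm2 v'.

Definition is_theta {n d : nat} (U : 'M[R]_(n, d)) (s : nat) (theta : R) : Prop :=
  roc_ineq U s theta /\ forall c, roc_ineq U s c -> theta <= c.

(* one step of Algorithm 1 (componentwise soft thresholding) *)
Definition ista_step {n d : nat} (U : 'M[R]_(n, d)) (y : 'cV[R]_n) (lam : R)
    (x : 'cV[R]_d) : 'cV[R]_d :=
  let xh := x - U^T *m (U *m x - y) in
  \col_i (Num.sg (xh i 0) * Num.max (`|xh i 0| - lam) 0).

(* iterates of Algorithm 1: x_1 = 0, x_{t+1} = ista_step lam_t x_t
   (index t : nat with t >= 1; ista_iter _ _ _ 0 is an unused dummy equal to 0) *)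
Fixpoint ista_iter {n d : nat} (U : 'M[R]_(n, d)) (y : 'cV[R]_n) (lam : nat -> R)
    (t : nat) : 'cV[R]_d :=
  match t with
  | 0 => 0
  | 1 => 0
  | t'.+1 => ista_step U y (lam t') (ista_iter U y lam t')
  end.

End Defs.

(* Write h = x_t - x*, S = supp x* and g = (U^T U - I) h.  The gradient step is
   x* - g + U^T e, so an index outside S survives soft thresholding only if
   |g_i| > lam_t - |U^T e|_oo >= (delta + sqrt 2 theta) |h| / sqrt s.  Were there more than s
   such indices, s of them would form a set T with |g_T| > (delta + sqrt 2 theta) |h|.  But
   |g_T|^2 = <U g_T, U h> - <g_T, h>, and splitting h along T, S and the rest of supp x_t
   (three disjoint sets of size at most s) bounds this by
   |g_T| (delta |h_T| + theta (|h_S| + |h_R|)) <= |g_T| (delta + sqrt 2 theta) |h|. *)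

From HB Require Import structures.
From mathcomp Require Import all_boot all_order all_algebra.
From mathcomp Require Import ring lra zify.
Import Order.TTheory GRing.Theory Num.Theory.
Set Implicit Arguments. Unset Strict Implicit. Unset Printing Implicit Defensive.
Local Open Scope ring_scope.

Section Vectors.
Variable R : rcfType.

Lemma sqnorm2_dotv k (v : 'cV[R]_k) : sqnorm2 v = dotv v v.
Proof. by apply: eq_bigr => i _; rewrite expr2. Qed.

Lemma dotvC k (a b : 'cV[R]_k) : dotv a b = dotv b a.
Proof. by apply: eq_bigr => i _; rewrite mulrC. Qed.

Lemma dotv0l k (b : 'cV[R]_k) : dotv 0 b = 0.
Proof. by apply: big1 => i _; rewrite mxE mul0r. Qed.

Lemma dotv0r k (a : 'cV[R]_k) : dotv a 0 = 0.
Proof. by rewrite dotvC dotv0l. Qed.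

Lemma dotvDr k (a b c : 'cV[R]_k) : dotv a (b + c) = dotv a b + dotv a c.
Proof. rewrite /dotv -big_split /=; apply: eq_bigr => i _; rewrite !mxE; ring. Qed.

Lemma dotvBr k (a b c : 'cV[R]_k) : dotv a (b - c) = dotv a b - dotv a c.
Proof. rewrite /dotv -sumrB; apply: eq_bigr => i _; rewrite !mxE; ring. Qed.

Lemma dotv_trmx m k (M : 'M[R]_(m, k)) a b : dotv a (M^T *m b) = dotv (M *m a) b.
Proof.
rewrite /dotv.
under eq_bigr => i _ do rewrite !mxE big_distrr /=.
under [RHS]eq_bigr => i _ do rewrite !mxE big_distrl /=.
rewrite exchange_big /=; apply: eq_bigr => i _; apply: eq_bigr => j _.
rewrite !mxE; ring.
Qed.

Lemma dotv_lincomb k (x y : R) (a b : 'cV[R]_k) :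
  dotv (x *: a + y *: b) (x *: a + y *: b) =
  x ^+ 2 * dotv a a + 2 * x * y * dotv a b + y ^+ 2 * dotv b b.
Proof.
rewrite /dotv !mulr_sumr -!big_split /=; apply: eq_bigr => i _; rewrite !mxE; ring.
Qed.

Lemma sqnorm2_ge0 k (v : 'cV[R]_k) : 0 <= sqnorm2 v.
Proof. by apply: sumr_ge0 => i _; rewrite sqr_ge0. Qed.

Lemma sqr_norm2 k (v : 'cV[R]_k) : norm2 v ^+ 2 = sqnorm2 v.
Proof. by rewrite /norm2 sqr_sqrtr // sqnorm2_ge0. Qed.

Lemma norm2_ge0 k (v : 'cV[R]_k) : 0 <= norm2 v.
Proof. exact: sqrtr_ge0. Qed.

Lemma norm2_eq0 k (v : 'cV[R]_k) : norm2 v = 0 -> v = 0.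
Proof.
move=> v0; have : sqnorm2 v = 0 by rewrite -sqr_norm2 v0 expr0n.
move=> /(psumr_eq0P (fun i _ => sqr_ge0 (v i 0))) v2_eq0.
apply/matrixP => i j; rewrite (ord1 j) mxE.
by apply/eqP; rewrite -sqrf_eq0 v2_eq0.
Qed.

Lemma norm2_le k (u v : 'cV[R]_k) : sqnorm2 u <= sqnorm2 v -> norm2 u <= norm2 v.
Proof. by move=> uv; rewrite /norm2 ler_sqrt // sqnorm2_ge0. Qed.

Lemma le_norminf k (v : 'cV[R]_k) i : `|v i 0| <= norminf v.
Proof. exact: (le_bigmax _ (fun i => `|v i 0|)). Qed.

End Vectors.

Section Restriction.
Variables (R : rcfType) (d : nat).
Implicit Types (T A B : {set 'I_d}) (v : 'cV[R]_d).

Definition supported_on T v := forall i, i \notin T -> v i 0 = 0.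

Definition restrict T v : 'cV[R]_d := \col_i (if i \in T then v i 0 else 0).

(* The coordinates of [v] on [T], listed in the column order of [colsubT U T]. *)
Definition compress T v : 'cV[R]_#|T| := \col_j v (enum_val j) 0.

Lemma supported_on_restrict T v : supported_on T (restrict T v).
Proof. by move=> i iT; rewrite mxE (negbTE iT). Qed.

Lemma supported_on_lincomb T (x y : R) (a b : 'cV[R]_d) :
  supported_on T a -> supported_on T b -> supported_on T (x *: a + y *: b).
Proof. by move=> aT bT i iT; rewrite !mxE aT // bT // !mulr0 addr0. Qed.

Lemma restrict_id T v : supported_on T v -> restrict T v = v.
Proof.
move=> vT; apply/matrixP => i j; rewrite (ord1 j) mxE.
by case: ifPn => // /vT ->.
Qed.

Lemma restrictU A B v :
  [disjoint A & B] -> restrict (A :|: B) v = restrict A v + restrict B v.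
Proof.
move=> AB; apply/matrixP => i j; rewrite (ord1 j) !mxE in_setU.
case: (boolP (i \in A)) => iA; last by rewrite add0r.
by rewrite (disjointFr AB iA) addr0.
Qed.

Lemma sqnorm2_restrict T v : sqnorm2 (restrict T v) = \sum_(i in T) v i 0 ^+ 2.
Proof.
rewrite /sqnorm2 [RHS]big_mkcond; apply: eq_bigr => i _; rewrite mxE.
by case: ifP => // _; rewrite expr0n.
Qed.

Lemma sqnorm2_restrictU A B v : [disjoint A & B] ->
  sqnorm2 (restrict (A :|: B) v) = sqnorm2 (restrict A v) + sqnorm2 (restrict B v).
Proof. by move=> AB; rewrite !sqnorm2_restrict -bigU //; apply: eq_bigl => i; rewrite !inE. Qed.

Lemma sqnorm2_restrict_le T v : sqnorm2 (restrict T v) <= sqnorm2 v.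
Proof.
rewrite sqnorm2_restrict [leRHS](bigID (mem T)) /= lerDl.
by apply: sumr_ge0 => i _; exact: sqr_ge0.
Qed.

Lemma dotv_restrict T a b : dotv (restrict T a) (restrict T b) = dotv (restrict T a) b.
Proof. by apply: eq_bigr => i _; rewrite !mxE; case: ifP; rewrite ?mul0r. Qed.

Lemma sqnorm2_restrict_gt T v (r : R) : (0 < #|T|)%N -> 0 <= r ->
  (forall i, i \in T -> r < `|v i 0|) -> #|T|%:R * r ^+ 2 < sqnorm2 (restrict T v).
Proof.
move=> /card_gt0P [i0 i0T] r0 rv; rewrite sqnorm2_restrict mulr_natl -sumr_const.
apply: ltr_sum; first by apply/hasP; exists i0 => //; exact: mem_index_enum.
move=> i /rv ri; by rewrite -(real_normK (num_real (v i 0))) ltr_pXn2r // nnegrE normr_ge0.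
Qed.

Lemma colsubT_compress n (U : 'M[R]_(n, d)) T v :
  supported_on T v -> colsubT U T *m compress T v = U *m v.
Proof.
move=> vT; apply/matrixP => k j; rewrite (ord1 j) !mxE.
under eq_bigr => i _ do rewrite !mxE.
rewrite -(big_enum_val (fun i => U k i * v i 0)) /=.
rewrite [RHS](bigID (mem T)) /= [X in _ = _ + X]big1 ?addr0 //.
by move=> i /vT ->; rewrite mulr0.
Qed.

Lemma sqnorm2_compress T v : supported_on T v -> sqnorm2 (compress T v) = sqnorm2 v.
Proof.
move=> vT; rewrite /sqnorm2.
under eq_bigr => i _ do rewrite !mxE.
rewrite -(big_enum_val (fun i => v i 0 ^+ 2)) /=.
rewrite [RHS](bigID (mem T)) /= [X in _ = _ + X]big1 ?addr0 //.
by move=> i /vT ->; rewrite expr0n.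
Qed.

End Restriction.

Arguments supported_on_restrict {R d} T v.

Section RestrictedIsometry.
Variables (R : rcfType) (n d s : nat) (U : 'M[R]_(n, d)).
Implicit Types (T A B : {set 'I_d}) (a b v : 'cV[R]_d).

Lemma rip_ineq_supported c T v : rip_ineq U s c -> (#|T| <= s)%N -> supported_on T v ->
  (1 - c) * sqnorm2 v <= sqnorm2 (U *m v) <= (1 + c) * sqnorm2 v.
Proof.
by move=> rip Ts vT; have := rip T Ts (compress T v); rewrite colsubT_compress ?sqnorm2_compress.
Qed.

Lemma roc_ineq_supported c T T' v v' : roc_ineq U s c ->
  (#|T| <= s)%N -> (#|T'| <= s)%N -> [disjoint T & T'] ->
  supported_on T v -> supported_on T' v' ->
  `|dotv (U *m v) (U *m v')| <= c * norm2 v * norm2 v'.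
Proof.
move=> roc Ts T's TT' vT v'T'; have := roc T T' Ts T's TT' (compress T v) (compress T' v').
by rewrite !colsubT_compress // /norm2 !sqnorm2_compress.
Qed.

(* Polarization: the RIP bounds on [U (x a + y b)] for [(x, y) = (|b|, +-|a|)]. *)
Lemma rip_ineq_dotv c T a b : rip_ineq U s c -> (#|T| <= s)%N ->
  supported_on T a -> supported_on T b ->
  `|dotv (U *m a) (U *m b) - dotv a b| <= c * norm2 a * norm2 b.
Proof.
move=> rip Ts aT bT.
have [a0|a_neq0] := eqVneq (norm2 a) 0.
  by rewrite a0 mulr0 mul0r (norm2_eq0 a0) mulmx0 !dotv0l subr0 normr0.
have [b0|b_neq0] := eqVneq (norm2 b) 0.
  by rewrite b0 mulr0 (norm2_eq0 b0) mulmx0 !dotv0r subr0 normr0.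
have a_gt0 : 0 < norm2 a by rewrite lt_def a_neq0 norm2_ge0.
have b_gt0 : 0 < norm2 b by rewrite lt_def b_neq0 norm2_ge0.
set al := norm2 a; set be := norm2 b.
set E := dotv (U *m a) (U *m b); set D := dotv a b.
set A' := dotv (U *m a) (U *m a); set B' := dotv (U *m b) (U *m b).
have rip_lincomb x y : (1 - c) * (x ^+ 2 * al ^+ 2 + 2 * x * y * D + y ^+ 2 * be ^+ 2)
    <= x ^+ 2 * A' + 2 * x * y * E + y ^+ 2 * B'
    <= (1 + c) * (x ^+ 2 * al ^+ 2 + 2 * x * y * D + y ^+ 2 * be ^+ 2).
  have := rip_ineq_supported rip Ts (supported_on_lincomb x y aT bT).
  rewrite !sqnorm2_dotv mulmxDr -!scalemxAr !dotv_lincomb.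
  by rewrite -[dotv a a]sqnorm2_dotv -[dotv b b]sqnorm2_dotv -!sqr_norm2.
move: (rip_lincomb be al) (rip_lincomb be (- al)) => /andP [h1 h2] /andP [h3 h4].
have ab0 : 0 < al * be by rewrite mulr_gt0.
have k1 : (al * be) * (E - D) <= (al * be) * (c * al * be) by nra.
have k2 : (al * be) * (D - E) <= (al * be) * (c * al * be) by nra.
rewrite !ler_pM2l // in k1 k2; rewrite ler_norml; apply/andP; split; lra.
Qed.

Lemma roc_ineq_ge0 c : (0 < s)%N -> (1 < d)%N -> roc_ineq U s c -> 0 <= c.
Proof.
move=> s0 d1 roc; pose i0 : 'I_d := Ordinal (ltnW d1); pose i1 : 'I_d := Ordinal d1.
pose e (i : 'I_d) : 'cV[R]_d := \col_k (k == i)%:R.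
have e_supp i : supported_on [set i] (e i).
  by move=> k; rewrite in_set1 mxE => /negbTE ->.
have norm2_e i : norm2 (e i) = 1.
  rewrite /norm2 /sqnorm2 (bigD1 i) //= big1 => [|k /negbTE ki]; last by rewrite mxE ki expr0n.
  by rewrite mxE eqxx expr1n addr0 sqrtr1.
have i0i1 : [disjoint [set i0] & [set i1]] by rewrite disjoints1 in_set1.
have := roc_ineq_supported roc _ _ i0i1 (e_supp i0) (e_supp i1).
by rewrite !cards1 !norm2_e !mulr1 => /(_ s0 s0); apply: le_trans.
Qed.

Definition gram_defect v : 'cV[R]_d := U^T *m (U *m v) - v.

Lemma norm2_restrict_gram_defect delta theta T A B h :
  rip_ineq U s delta -> roc_ineq U s theta -> 0 <= delta -> 0 <= theta ->
  (#|T| <= s)%N -> (#|A| <= s)%N -> (#|B| <= s)%N ->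
  [disjoint T & A :|: B] -> [disjoint A & B] -> supported_on (T :|: (A :|: B)) h ->
  norm2 (restrict T (gram_defect h)) <= (delta + Num.sqrt 2 * theta) * norm2 h.
Proof.
move=> rip roc delta0 theta0 Ts As Bs TAB AB hTAB.
have [TA TB] : [disjoint T & A] /\ [disjoint T & B].
  by split; apply: disjointWr TAB; rewrite ?subsetUl ?subsetUr.
set w := restrict T (gram_defect h).
set hT := restrict T h; set hA := restrict A h; set hB := restrict B h.
have h_split : h = hT + hA + hB by rewrite -addrA -restrictU // -restrictU // restrict_id.
have w_le : sqnorm2 w <= norm2 w * (delta * norm2 hT + theta * norm2 hA + theta * norm2 hB).
  have -> : sqnorm2 w = (dotv (U *m w) (U *m hT) - dotv w hT)
      + dotv (U *m w) (U *m hA) + dotv (U *m w) (U *m hB).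
    rewrite sqnorm2_dotv dotv_restrict dotvBr dotv_trmx -dotv_restrict -/hT.
    by rewrite -/w [X in dotv _ (U *m X)]h_split !mulmxDr !dotvDr; ring.
  have wT := supported_on_restrict T (gram_defect h).
  have := rip_ineq_dotv rip Ts wT (supported_on_restrict T h).
  have := roc_ineq_supported roc Ts As TA wT (supported_on_restrict A h).
  have := roc_ineq_supported roc Ts Bs TB wT (supported_on_restrict B h).
  rewrite -/w -/hT -/hA -/hB => bB bA bT.
  set x := dotv (U *m w) (U *m hT) - dotv w hT.
  have := ler_norm x; have := ler_norm (dotv (U *m w) (U *m hA)).
  have := ler_norm (dotv (U *m w) (U *m hB)); lra.
have {}w_le : norm2 w <= delta * norm2 hT + theta * (norm2 hA + norm2 hB).
  move: w_le; rewrite -sqr_norm2 expr2.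
  have [->|w_gt0] := eqVneq (norm2 w) 0.
    by move=> _; apply: addr_ge0; apply: mulr_ge0; rewrite ?addr_ge0 ?norm2_ge0.
  rewrite ler_pM2l ?lt_def ?w_gt0 ?norm2_ge0 //; lra.
have hT_le : norm2 hT <= norm2 h by apply/norm2_le/sqnorm2_restrict_le.
have hAB_le : norm2 hA + norm2 hB <= Num.sqrt 2 * norm2 h.
  have : sqnorm2 hA + sqnorm2 hB <= sqnorm2 h.
    by rewrite -sqnorm2_restrictU // sqnorm2_restrict_le.
  rewrite -!sqr_norm2 => sq_le.
  rewrite -ler_sqr ?nnegrE ?addr_ge0 ?mulr_ge0 ?sqrtr_ge0 ?norm2_ge0 //.
  rewrite exprMn sqr_sqrtr ?ler0n //.
  have := sqr_ge0 (norm2 hA - norm2 hB); nra.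
have := ler_wpM2l delta0 hT_le; have := ler_wpM2l theta0 hAB_le; lra.
Qed.

End RestrictedIsometry.

Lemma card_setU3_le (T : finType) (A B C : {set T}) :
  (#|A :|: B :|: C| <= #|A| + #|B :\: A| + #|C :\: A|)%N.
Proof.
have -> : A :|: B :|: C = A :|: (B :\: A) :|: (C :\: A).
  by apply/setP => i; rewrite !in_setU !in_setD; case: (i \in A).
apply: leq_trans (leq_card_setU _ _).1 _; rewrite leq_add2r.
exact: (leq_card_setU _ _).1.
Qed.

Section Ista.
Variables (R : rcfType) (n d : nat) (U : 'M[R]_(n, d)).

Lemma sg_mul_max_neq0 (lam z : R) : Num.sg z * Num.max (`|z| - lam) 0 != 0 -> lam < `|z|.
Proof.
move=> nz; rewrite ltNge; apply/negP => z_le; move: nz.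
by rewrite max_r ?mulr0 ?eqxx // subr_le0.
Qed.

Lemma ista_iterS (y : 'cV[R]_n) lam t :
  (1 <= t)%N -> ista_iter U y lam t.+1 = ista_step U y (lam t) (ista_iter U y lam t).
Proof. by case: t. Qed.

Lemma gradient_step_gram_defect (xstar x : 'cV[R]_d) (e : 'cV[R]_n) :
  x - U^T *m (U *m x - (U *m xstar + e)) = xstar - gram_defect U (x - xstar) + U^T *m e.
Proof.
rewrite /gram_defect !mulmxBr !mulmxDr.
move: (U^T *m (U *m x)) (U^T *m (U *m xstar)) (U^T *m e) => A1 A2 A3.
by apply/matrixP => k j; rewrite !mxE; ring.
Qed.

Lemma gram_defect_gt_off_support (xstar x : 'cV[R]_d) (e y : 'cV[R]_n) lam i :
  y = U *m xstar + e -> i \in supp (ista_step U y lam x) :\: supp xstar ->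
  lam - norminf (U^T *m e) < `|gram_defect U (x - xstar) i 0|.
Proof.
move=> ->; rewrite !inE negbK => /andP [/eqP xstar_i].
rewrite mxE gradient_step_gram_defect => /sg_mul_max_neq0.
have := le_norminf (U^T *m e) i.
move: (gram_defect U _) (U^T *m e) => g E E_le; rewrite !mxE xstar_i sub0r => lt_lam.
have := ler_normD (- g i 0) (E i 0); rewrite normrN; lra.
Qed.

Lemma card_ista_step_off_support s delta theta (xstar x : 'cV[R]_d) (e y : 'cV[R]_n) lam :
  (0 < s)%N -> rip_ineq U s delta -> roc_ineq U s theta -> 0 <= delta -> 0 <= theta ->
  (#|supp xstar| <= s)%N -> y = U *m xstar + e -> (#|supp x :\: supp xstar| <= s)%N ->
  norminf (U^T *m e) + (delta + Num.sqrt 2 * theta) / Num.sqrt s%:R * norm2 (x - xstar)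
    <= lam ->
  (#|supp (ista_step U y lam x) :\: supp xstar| <= s)%N.
Proof.
move=> s0 rip roc delta0 theta0 Ss ye xs lam_ge.
set S := supp xstar; set h := x - xstar in lam_ge *.
set c := delta + Num.sqrt 2 * theta in lam_ge *.
rewrite leqNgt; apply/negP => /ltnW /card_geqP [q [q_uniq q_size q_new]].
set T := [set i in q]; set B := supp x :\: (S :|: T).
have Ts : #|T| = s by rewrite cardsE -q_size; apply/card_uniqP.
have T_new i : i \in T -> i \in supp (ista_step U y lam x) :\: S by rewrite inE => /q_new.
have TSB : [disjoint T & S :|: B].
  rewrite disjoint_subset; apply/subsetP => i iT; move/T_new: (iT).
  by rewrite in_setD => /andP [iS _]; rewrite inE in_setU in_setD in_setU iT orbT /= orbF.
have SB : [disjoint S & B].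
  by rewrite disjoint_subset; apply/subsetP => i iS; rewrite inE in_setD in_setU iS.
have Bs : (#|B| <= s)%N by apply: leq_trans xs; apply/subset_leq_card/setDS/subsetUl.
have h_supp : supported_on (T :|: (S :|: B)) h.
  move=> i; rewrite !in_setU !negb_or => /and3P [iT iS iB].
  have xstar_i : xstar i 0 = 0 by move: iS; rewrite inE negbK => /eqP.
  have x_i : x i 0 = 0.
    by move: iB; rewrite in_setD in_setU (negbTE iS) (negbTE iT) /= inE negbK => /eqP.
  by rewrite !mxE x_i xstar_i subr0.
have c0 : 0 <= c by rewrite addr_ge0 // mulr_ge0 ?sqrtr_ge0.
have s_gt0 : 0 < Num.sqrt (s%:R : R) by rewrite sqrtr_gt0 ltr0n.
have r0 : 0 <= c / Num.sqrt s%:R * norm2 h by rewrite mulr_ge0 ?norm2_ge0 // divr_ge0 // ltW.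
have g_gt i : i \in T -> c / Num.sqrt s%:R * norm2 h < `|gram_defect U h i 0|.
  by move=> /T_new /(gram_defect_gt_off_support ye); rewrite -/h; lra.
have := sqnorm2_restrict_gt _ r0 g_gt; rewrite Ts => /(_ s0).
have -> : s%:R * (c / Num.sqrt s%:R * norm2 h) ^+ 2 = (c * norm2 h) ^+ 2.
  rewrite !exprMn exprVn sqr_sqrtr ?ler0n //; field.
  by rewrite pnatr_eq0 -lt0n.
have := norm2_restrict_gram_defect rip roc delta0 theta0 (eq_leq Ts) Ss Bs TSB SB h_supp.
rewrite -/c -sqr_norm2 => w_le; apply/negP; rewrite -leNgt.
by rewrite ler_sqr ?nnegrE ?norm2_ge0 ?mulr_ge0 ?norm2_ge0.
Qed.

End Ista.

Theorem corollary2 (R : rcfType) (n d s : nat) (U : 'M[R]_(n, d))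
    (xstar : 'cV[R]_d) (e y : 'cV[R]_n) (lam : nat -> R) (delta theta : R) (t : nat) :
  (0 < s)%N -> (2 * s <= d)%N ->
  is_delta U s delta -> is_theta U s theta ->
  (#|supp xstar| <= s)%N ->
  y = U *m xstar + e ->
  (forall k, 0 < lam k) ->
  (1 <= t)%N ->
  (#|supp (ista_iter U y lam t) :\: supp xstar| <= s)%N ->
  lam t >= norminf (U^T *m e)
           + (delta + Num.sqrt 2 * theta) / Num.sqrt (s%:R)
             * norm2 (ista_iter U y lam t - xstar) ->
  (#|supp (ista_iter U y lam t.+1) :\: supp xstar| <= s)%N /\
  (#|supp xstar :|: supp (ista_iter U y lam t) :|: supp (ista_iter U y lam t.+1)|
     <= 3 * s)%N.
Proof.
move=> s0 sd [delta0 rip _] [roc _] Ss ye _ t1 xs lam_ge.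
have theta0 : 0 <= theta by apply: roc_ineq_ge0 roc => //; lia.
rewrite ista_iterS //.
have x1s := card_ista_step_off_support s0 rip roc delta0 theta0 Ss ye xs lam_ge.
split => //; apply: leq_trans (card_setU3_le _ _ _) _; lia.
Qed.
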